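(* Let $C\subset\mathbb{R}^n$ be a pointed, $n$-dimensional closed convex cone and $\Omega=S^{n-1}\cap\operatorname{int}C^{\circ}$. Let $\mu$ be a nonzero, finite Borel measure on $\Omega$, and let $(\omega_i)_{i\in\mathbb{N}}$ be compact subsets of $\Omega$ with $\omega_i\subset\operatorname{int}\omega_{i+1}$ and $\bigcup_i\omega_i=\Omega$. Let $\mu_i(\sigma)=\mu(\sigma\cap\omega_i)$, let $i_0$ be such that $\mu_{i_0}\neq0$, and for $f\in C^+(\omega_i)$ let $I_{\mu_i}(f)=\gamma^n([f])\int_{\omega_i}f\,d\mu_i$, where $[f]$ is the Wulff shape associated with $(C,\omega_i,f)$. Suppose that for each $i\ge i_0$ there is a $C$-pseudo-cone $K_i\in\mathcal{K}(C,\omega_i)$ with $I_{\mu_i}(\bar h_{K_i})=\sup\{I_{\mu_i}(f):f\in C^+(\omega_i)\}$. Then there exists a constant $a>0$ such that $I_{\mu_i}(\bar h_{K_i})>a$ for all $i\ge i_0$.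
   Context: $C^{\circ}=\{x:\langle x,y\rangle\le 0\ \forall y\in C\}$. A pseudo-cone is a nonempty closed convex set $K$ with $o\notin K$ and $\lambda K\subseteq K$ for $\lambda\ge1$; it is a $C$-pseudo-cone if its recession cone $\{z:K+z\subseteq K\}$ equals $C$. Support function $h_K(x)=\sup_{y\in K}\langle x,y\rangle$ on $C^{\circ}$, $\bar h_K=-h_K$; $H_K^-(u)=\{x:\langle x,u\rangle\le h_K(u)\}$. $\mathcal{K}(C,\omega)$ is the set of $C$-pseudo-cones $K$ with $K=C\cap\bigcap_{u\in\omega}H^-_K(u)$. $C^+(\omega)$ denotes the set of continuous functions $\omega\to(0,\infty)$. The Wulff shape of a positive continuous $h$ on compact $\omega\subset\Omega$ is $[h]=C\cap\bigcap_{u\in\omega}\{y:\langle y,u\rangle\le -h(u)\}$. $\gamma^n$ is the standard Gaussian probability measure on $\mathbb{R}^n$. *)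

From HB Require Import structures.
From mathcomp Require Import all_boot all_order all_algebra.
From mathcomp Require Import all_classical all_reals all_analysis.
Set Implicit Arguments. Unset Strict Implicit. Unset Printing Implicit Defensive.
Import Order.TTheory GRing.Theory Num.Theory.
Import numFieldNormedType.Exports.
Local Open Scope classical_set_scope.
Local Open Scope ring_scope.

Section Defs.
Variables (R : realType) (n : nat).

Notation V := 'rV[R]_n.

Definition dotv (x y : V) : R := \sum_(i < n) x 0 i * y 0 i.

Definition BorelRn := g_sigma_algebraType (@open V).

Definition convex_set (A : set V) : Prop :=
  forall x y (t : R), A x -> A y -> 0 <= t <= 1 -> A ((1 - t) *: x + t *: y).

Definition closed_convex_cone (C : set V) : Prop :=
  [/\ C 0, closed C, convex_set C & forall (l : R) x, 0 <= l -> C x -> C (l *: x)].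

Definition pointed (C : set V) : Prop := forall x, C x -> C (- x) -> x = 0.

Definition polar (C : set V) : set V := [set x | forall y, C y -> dotv x y <= 0].

Definition Omega (C : set V) : set V := [set u | dotv u u = 1 /\ (polar C)° u].

Definition rel_interior (S A : set V) : set V :=
  [set x | exists U : set V, [/\ open U, U x & U `&` S `<=` A]].

Definition pseudo_cone (K : set V) : Prop :=
  [/\ K !=set0, closed K, convex_set K, ~ K 0 &
      forall (l : R) y, 1 <= l -> K y -> K (l *: y)].

Definition rec_cone (K : set V) : set V := [set z | forall y, K y -> K (y + z)].

Definition C_pseudo_cone (C K : set V) : Prop := pseudo_cone K /\ rec_cone K = C.

(* support function h_K (extended-real valued; finite on int C° for pseudo-cones) *)
Definition supp (K : set V) (x : V) : \bar R :=
  ereal_sup [set (dotv x y)%:E | y in K].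

Definition hbar (K : set V) (u : V) : R := - fine (supp K u).

Definition halfsp (K : set V) (u : V) : set V := [set x | (dotv x u)%:E <= supp K u]%E.

Definition KCw (C w K : set V) : Prop :=
  C_pseudo_cone C K /\ K = C `&` \bigcap_(u in w) halfsp K u.

(* f ∈ C^+(ω) : continuous positive functions on ω (values off ω irrelevant) *)
Definition Cplus (w : set V) (f : V -> R) : Prop :=
  {within w, continuous f} /\ forall u, w u -> 0 < f u.

Definition wulff (C w : set V) (h : V -> R) : set V :=
  C `&` \bigcap_(u in w) [set y | dotv y u <= - h u].

End Defs.

(* Standard Gaussian measure gamma^n, written out as iterated one-dimensional
   Lebesgue integrals of the standard normal density (Fubini/Tonelli form). *)
Fixpoint gaussn (R : realType) (n : nat) : set 'rV[R]_n -> \bar R :=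
  match n return set 'rV[R]_n -> \bar R with
  | 0 => fun A => (\1_A (0 : 'rV[R]_0))%:E
  | m.+1 => fun A =>
      (\int[@lebesgue_measure R]_t
         (((Num.sqrt (pi *+ 2))^-1 * expR (- t ^+ 2 / 2))%:E *
          @gaussn R m [set v : 'rV[R]_m | A (row_mx (\row_(j < 1) t) v)]))%E
  end.

(* I_{mu_i}(f) = gamma^n([f]) * \int_{omega_i} f d mu_i ,
   where mu_i = mu restricted to omega_i, so \int_{omega_i} f dmu_i = \int_{omega_i} f dmu *)
Definition Imu (R : realType) (n : nat) (C : set 'rV[R]_n)
  (mu : {measure set (BorelRn R n) -> \bar R}) (w : set 'rV[R]_n) (f : 'rV[R]_n -> R)
  : \bar R :=
  (gaussn (wulff C w f) * \int[mu]_(x in (w : set (BorelRn R n))) (f x)%:E)%E.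

From HB Require Import structures.
From mathcomp Require Import all_boot all_order all_algebra.
From mathcomp Require Import all_classical all_reals all_analysis.
From mathcomp Require Import ring lra.
Import Order.TTheory GRing.Theory Num.Theory.
Import numFieldNormedType.Exports.
Local Open Scope classical_set_scope.
Local Open Scope ring_scope.

(* The supremum that [hbar (K i)] attains dominates the value of [Imu] at a
   constant function c.  As C has nonempty interior it contains a ball
   B(x, 2c); for y in B(x, c) and a unit vector u of C° the point y + c u is
   in C, so <y, u> <= -c.  Hence B(x, c) lies in the Wulff shape of c for
   every omega_i, and I_{mu_i}(c) >= gamma^n(B(x, c)) * c * mu(omega_{i0}),
   a positive bound independent of i because the omega_i increase. *)

(* The integrand defining [gaussn] is not known to be measurable, so
   monotonicity is taken directly from the definition of the integral as a
   supremum over simple functions. *)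
Lemma ge0_le_integralT d (T : measurableType d) (R : realType)
    (mu : {measure set T -> \bar R}) (f g : T -> \bar R) :
  (forall x, (0 <= f x)%E) -> (forall x, (f x <= g x)%E) ->
  (\int[mu]_x f x <= \int[mu]_x g x)%E.
Proof.
move=> f0 fg; have g0 x : (0 <= g x)%E := le_trans (f0 x) (fg x).
rewrite !ge0_integralTE//; apply: ereal_sup_le => _ [h hf <-]; exists h => //.
by move=> x; exact: le_trans (hf x) (fg x).
Qed.

Section GaussianMeasure.
Set Implicit Arguments. Unset Strict Implicit.
Variable R : realType.

Definition std_normal_density (t : R) : R :=
  (Num.sqrt (pi *+ 2))^-1 * expR (- t ^+ 2 / 2).

Lemma std_normal_density_gt0 t : 0 < std_normal_density t.
Proof.
rewrite mulr_gt0 ?expR_gt0// invr_gt0 sqrtr_gt0 mulrn_wgt0//; exact: pi_gt0.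
Qed.

Lemma std_normal_density_ge0 t : 0 <= std_normal_density t.
Proof. exact/ltW/std_normal_density_gt0. Qed.

Lemma std_normal_density_le_norm (M t : R) :
  `|t| <= M -> std_normal_density M <= std_normal_density t.
Proof.
move=> tM; rewrite ler_wpM2l ?invr_ge0 ?sqrtr_ge0// ler_expR.
rewrite ler_pdivrMr// divfK// lerN2 -(real_normK (num_real t)).
by have := normr_ge0 t; nra.
Qed.

Lemma gaussnS m (A : set 'rV[R]_m.+1) :
  gaussn A = (\int[@lebesgue_measure R]_t ((std_normal_density t)%:E *
               gaussn [set v : 'rV[R]_m | A (row_mx (\row_(j < 1) t) v)]))%E.
Proof. by []. Qed.

Lemma gaussn_ge0 m (A : set 'rV[R]_m) : (0 <= gaussn A)%E.
Proof.
elim: m A => [|m IH] A; first by rewrite /= lee_fin /indic; case: (_ \in _).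
rewrite gaussnS; apply: integral_ge0 => t _.
by rewrite mule_ge0 ?lee_fin ?std_normal_density_ge0.
Qed.

Lemma le_gaussn m (A B : set 'rV[R]_m) : A `<=` B -> (gaussn A <= gaussn B)%E.
Proof.
elim: m A B => [|m IH] A B AB.
  rewrite /= lee_fin /indic; case: (boolP (0 \in A)) => [/set_mem/AB B0|_].
    by rewrite mem_set.
  by case: (_ \in _).
rewrite !gaussnS; apply: ge0_le_integralT => t.
  by rewrite mule_ge0 ?lee_fin ?std_normal_density_ge0 ?gaussn_ge0.
rewrite lee_wpmul2l ?lee_fin ?std_normal_density_ge0//.
by apply: IH => v /= /AB.
Qed.

Lemma row_mx_ball m (x : 'rV[R]_(1 + m)) (r : R) (t : R) (v : 'rV[R]_m) :
  ball (lsubmx x 0 0) r t -> ball (rsubmx x) r v ->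
  ball x r (row_mx (\row_(j < 1) t) v).
Proof.
move=> tb [r0 vb]; split => // i j; rewrite (ord1 i) -(splitK j).
case: (fintype.split j) => k /=.
- by rewrite row_mxEl mxE (ord1 k); move: tb; rewrite mxE.
- by rewrite row_mxEr; move: (vb 0 k); rewrite mxE.
Qed.

(* By induction on the dimension: on the slab |t - x_0| < r the density is at
   least its value at |x_0| + r, and each slice contains a ball of dimension
   m around the remaining coordinates. *)
Lemma gaussn_ball_ge m (x : 'rV[R]_m) (r : R) : 0 < r ->
  exists2 g : R, 0 < g & (g%:E <= gaussn (ball x r))%E.
Proof.
elim: m x => [|m IH] x r0.
  by exists 1 => //=; rewrite lee_fin /indic mem_set// (thinmx0 x); exact: ballxx.
have [g g0 gle] := IH (rsubmx (x : 'rV_(1 + m))) r0.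
pose x0 := lsubmx (x : 'rV_(1 + m)) 0 0.
pose c := std_normal_density (`|x0| + r) * g.
have c0 : 0 < c by rewrite mulr_gt0 ?std_normal_density_gt0.
exists (c * (r *+ 2)); first by rewrite mulr_gt0 ?pmulrn_lgt0.
have mball := measurable_realfun.measurable_ball x0 r.
have -> : (c * (r *+ 2))%:E = (\int[@lebesgue_measure R]_t (c * \1_(ball x0 r) t)%:E)%E.
  under eq_integral => t _ do rewrite EFinM.
  rewrite ge0_integralZl_EFin ?(ltW c0)//; last first.
    exact/measurable_realfun.measurable_EFinP/measurable_realfun.measurable_indic.
  rewrite integral_indic// setIT EFinM; congr (_ * _)%E.
  by symmetry; exact: lebesgue_measure_ball (ltW r0).
rewrite gaussnS; apply: ge0_le_integralT => t.
  by rewrite lee_fin mulr_ge0 ?(ltW c0)// /indic; case: (_ \in _).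
have [tb|tNb] := pselect (ball x0 r t); last first.
  by rewrite /indic memNset// mulr0 mule_ge0 ?lee_fin ?std_normal_density_ge0 ?gaussn_ge0.
rewrite /indic mem_set// mulr1 EFinM lee_pmul ?lee_fin ?std_normal_density_ge0 ?(ltW g0)//.
- apply: std_normal_density_le_norm; move: tb; rewrite /ball /= => tb.
  by rewrite -(subrKC x0 t) (le_trans (ler_normD _ _))// lerD2l distrC ltW.
- by apply: (le_trans gle); apply: le_gaussn => v /= /(row_mx_ball tb).
Qed.

End GaussianMeasure.

Section ConeGeometry.
Variables (R : realType) (n : nat).
Implicit Types (C S A w : set 'rV[R]_n) (u x y z : 'rV[R]_n).

Lemma dotvC u y : dotv u y = dotv y u.
Proof. by apply: eq_bigr => i _; rewrite mulrC. Qed.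

Lemma dotvDr u y z : dotv u (y + z) = dotv u y + dotv u z.
Proof. by rewrite /dotv -big_split; apply: eq_bigr => i _; rewrite mxE mulrDr. Qed.

Lemma dotvZr u (a : R) y : dotv u (a *: y) = a * dotv u y.
Proof. by rewrite /dotv mulr_sumr; apply: eq_bigr => i _; rewrite mxE mulrCA. Qed.

Lemma unit_coord_le1 u j : dotv u u = 1 -> `|u 0 j| <= 1.
Proof.
move=> uu; have uj2 : u 0 j * u 0 j <= 1.
  rewrite -uu /dotv (bigD1 j) //= lerDl; apply: sumr_ge0 => i _.
  by rewrite -expr2 sqr_ge0.
by have := normr_ge0 (u 0 j); have := real_normK (num_real (u 0 j)); nra.
Qed.

Lemma ball_addZ_unit x y u (r : R) : dotv u u = 1 ->
  ball x (r / 2) y -> ball x r (y + (r / 2) *: u).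
Proof.
move=> uu [r0 xy]; have r_gt0 : 0 < r by lra.
split => // i j; rewrite (ord1 i) /ball /= !mxE opprD addrA.
rewrite (le_lt_trans (ler_normB _ _))// normrZ gtr0_norm// [r in _ < r](splitr r).
by rewrite ltr_leD ?ler_piMr ?unit_coord_le1 ?(ltW r0)//; exact: xy.
Qed.

Lemma ball_sub_wulff_cst C w x (r : R) : ball x r `<=` C -> w `<=` Omega C ->
  ball x (r / 2) `<=` wulff C w (fun=> r / 2).
Proof.
move=> xrC wO y xy; have r_gt0 : 0 < r by case: xy => r0 _; lra.
split; first by apply/xrC/(le_ball _ xy); rewrite ler_pdivrMr//; lra.
move=> u /wO [uu /interior_subset uC] /=.
have := uC _ (xrC _ (ball_addZ_unit uu xy)).
by rewrite dotvDr dotvZr uu dotvC; lra.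
Qed.

Lemma rel_interior_sub S A x : S x -> rel_interior S A x -> A x.
Proof. by move=> Sx [U [_ Ux US]]; exact: US. Qed.

Lemma nested_rel_interior_homo S (w : nat -> set 'rV[R]_n) :
  (forall i, w i `<=` S) -> (forall i, w i `<=` rel_interior S (w i.+1)) ->
  {homo w : i j / (i <= j)%N >-> i `<=` j}.
Proof.
move=> wS wint; apply: (@homo_leq _ _ (@subset _)) => [A|B A D|i x wix].
- exact: subset_refl.
- exact: subset_trans.
exact: rel_interior_sub (wS _ _ wix) (wint _ _ wix).
Qed.

Lemma compact_measurable_Rn A : compact A -> measurable (A : set (BorelRn R n)).
Proof.
move=> /(compact_closed (@norm_hausdorff _ _)) Acl.
rewrite -[A]setCK; apply: measurableC; apply: sub_sigma_algebra.
by rewrite /= openC.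
Qed.

Lemma Cplus_cst w (c : R) : 0 < c -> Cplus w (fun=> c).
Proof. by split => // ?; exact: cvg_cst. Qed.

Lemma Imu_cst C (mu : {measure set (BorelRn R n) -> \bar R}) w (c : R) :
  measurable (w : set (BorelRn R n)) ->
  Imu C mu w (fun=> c) = (gaussn (wulff C w (fun=> c)) * (c%:E * mu w))%E.
Proof. by move=> mw; rewrite /Imu (integral_cst mu mw c%:E). Qed.

End ConeGeometry.

Theorem lemma4p3 (R : realType) (n : nat) (C : set 'rV[R]_n)
  (hC : closed_convex_cone C) (hCp : pointed C) (hCn : (C°) !=set0)
  (mu : {finite_measure set (BorelRn R n) -> \bar R})
  (hmuO : mu (~` (Omega C : set (BorelRn R n))) = 0%E)
  (hmu0 : mu setT != 0%E)
  (w : nat -> set 'rV[R]_n)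
  (hwc : forall i, compact (w i))
  (hwO : forall i, w i `<=` Omega C)
  (hwi : forall i, w i `<=` rel_interior (Omega C) (w i.+1))
  (hwU : \bigcup_i w i = Omega C)
  (i0 : nat) (hi0 : mu (w i0 : set (BorelRn R n)) != 0%E)
  (K : nat -> set 'rV[R]_n)
  (hK : forall i, (i0 <= i)%N ->
     KCw C (w i) (K i) /\
     Imu C mu (w i) (hbar (K i)) =
       ereal_sup [set Imu C mu (w i) f | f in Cplus (w i)]) :
  exists a : R, 0 < a /\
    forall i, (i0 <= i)%N -> (a%:E < Imu C mu (w i) (hbar (K i)))%E.
Proof.
have [x /nbhs_ballP[r r0 xrC]] := hCn.
pose c := r / 2; have c0 : 0 < c by rewrite divr_gt0.
have [g g0 gle] := gaussn_ball_ge x c0.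
have mw i := compact_measurable_Rn (hwc i).
pose m0 := fine (mu (w i0 : set (BorelRn R n))).
have m0E : m0%:E = mu (w i0 : set (BorelRn R n)) by rewrite fineK ?fin_num_measure.
have m0_gt0 : 0 < m0 by rewrite -lte_fin m0E lt0e hi0 measure_ge0.
exists (g * c * m0 / 2); split => [|i i0i]; first by rewrite !divr_gt0 ?mulr_gt0.
have Imu_le_sup : (Imu C mu (w i) (fun=> c) <=
    ereal_sup [set Imu C mu (w i) f | f in Cplus (w i)])%E.
  by apply: ereal_sup_ubound; exists (fun=> c) => //; exact: Cplus_cst.
rewrite (proj2 (hK i i0i)); apply: lt_le_trans Imu_le_sup.
have lb : ((g * c * m0)%:E <= Imu C mu (w i) (fun=> c))%E.
  rewrite Imu_cst// -mulrA (EFinM g) (EFinM c) m0E.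
  rewrite lee_pmul ?lee_fin ?mulr_ge0 ?(ltW g0) ?(ltW c0)//.
  - by rewrite mule_ge0 ?lee_fin ?(ltW c0) ?measure_ge0.
  - exact/(le_trans gle)/le_gaussn/ball_sub_wulff_cst.
  - rewrite lee_pmul2l ?lte_fin//; apply: le_measure; rewrite ?inE//.
    exact: nested_rel_interior_homo.
apply: lt_le_trans lb; rewrite lte_fin.
have : 0 < g * c * m0 by rewrite !mulr_gt0.
lra.
Qed.
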